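(* Assume (H1) for some $\alpha\in[0,1]$ and (H2)–(H4). Then: (1) (Sub-critical) If $\lambda\le\lambda_s$, there exists a unique $z\le z_s$ with $\lambda=\sum_{j\ge1}a_jQ_jz^{j+1}+a_1z^2$, and $(Q_iz^i)_{i\ge1}$ is a steady state. Moreover, if $b_i\le i\,a_i$ for all sufficiently large $i$, then $(Q_iz^i)_{i\ge1}$ is the unique steady state; if instead there is $\nu>1$ with $b_i>i^\nu a_i$ for all sufficiently large $i$, then there are infinitely many steady states. (2) (Super-critical) If $\lambda>\lambda_s$, there exists no steady state.
   Context: Let $\lambda\ge 0$ and let $(a_i)_{i\ge1}$, $(b_i)_{i\ge1}$ be sequences of nonnegative real numbers. Consider the infinite system of ODEs $\frac{d}{dt}C_1=\lambda-\sum_{j\ge1}a_jC_1C_j-a_1C_1^2$, $\frac{d}{dt}C_i=J_{i-1}-J_i$ for $i\ge2$, where $J_i=a_iC_1C_i-b_{i+1}C_{i+1}$ for $i\ge1$. A steady state is a sequence $C=(C_i)_{i\ge1}$ of nonnegative reals with $\sum_{i\ge1}a_iC_i<\infty$ such that $\lambda-\sum_{j\ge1}a_jC_1C_j-a_1C_1^2=0$ and $J_{i-1}=J_i$ for all $i\ge2$ (i.e. a constant-in-time solution). (H1): there exists $a\ge0$ such that $0\le a_i\le a\,i^\alpha$ and $b_i\ge0$ for all $i\ge1$. Detailed balance coefficients: $Q_1=1$, $Q_i=\prod_{j=2}^i\frac{a_{j-1}}{b_j}$ for $i\ge2$. $z_s\in[0,+\infty]$ is the radius of convergence of the power series $\sum_i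 a_iQ_iz^i$, and $\lambda_s:=\sup_{z\le z_s}\big(\sum_{j\ge1}a_jQ_jz^{j+1}+a_1z^2\big)$. (H2): $\inf_i a_i=\underline a>0$ and $\inf_i b_i=\underline b>0$. (H3): $\lim_{i\to\infty}Q_{i+1}/Q_i=1/z_s$. (H4): there is $l>0$ with $\lim_{i\to\infty}a_{i+1}/a_i=l$. *)

From Stdlib Require Import Reals Lra.
From Coquelicot Require Import Coquelicot.
Open Scope R_scope.

(* Sequences are indexed by nat; only indices i >= 1 are meaningful. *)

(* Detailed balance coefficients: Q_1 = 1, Q_{m+1} = Q_m * a_m / b_{m+1},
   i.e. Q_i = prod_{j=2}^i a_{j-1}/b_j.  (Q 0 is an irrelevant dummy.) *)
Fixpoint Qc (a b : nat -> R) (n : nat) : R :=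
  match n with
  | O => 1
  | S m => match m with
           | O => 1
           | S _ => Qc a b m * a m / b n
           end
  end.

Definition zs_coef (a b : nat -> R) (n : nat) : R :=
  match n with O => 0 | _ => a n * Qc a b n end.

Definition z_s (a b : nat -> R) : Rbar := CV_radius (zs_coef a b).

(* F(z) = sum_{j>=1} a_j Q_j z^{j+1} + a_1 z^2, valued in [0,+oo] for z >= 0
   (limit of the nondecreasing partial sums). *)
Definition Fz (a b : nat -> R) (z : R) : Rbar :=
  Rbar_plus (Lim_seq (fun n => sum_n (fun j => a (S j) * Qc a b (S j) * z ^ (S j + 1)) n))
            (Finite (a 1%nat * z ^ 2)).

Definition lambda_s (a b : nat -> R) : Rbar :=
  Rbar_lub (fun y => exists z : R, 0 <= z /\ Rbar_le (Finite z) (z_s a b) /\ y = Fz a b z).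

Definition Rbar_inv_ext (z : Rbar) : Rbar :=
  match z with
  | Finite r => if Req_EM_T r 0 then p_infty else Finite (/ r)
  | _ => Finite 0
  end.

Definition Jflux (a b C : nat -> R) (i : nat) : R :=
  a i * C 1%nat * C i - b (S i) * C (S i).

Definition steady_state (a b : nat -> R) (lam : R) (C : nat -> R) : Prop :=
  (forall i, (1 <= i)%nat -> 0 <= C i) /\
  ex_series (fun j => a (S j) * C (S j)) /\
  lam - Series (fun j => a (S j) * C 1%nat * C (S j)) - a 1%nat * C 1%nat ^ 2 = 0 /\
  (forall i, (2 <= i)%nat -> Jflux a b C (i - 1) = Jflux a b C i).

Definition H1 (a b : nat -> R) (alpha : R) : Prop :=
  exists a0 : R, 0 <= a0 /\
    forall i, (1 <= i)%nat ->
      0 <= a i /\ a i <= a0 * Rpower (INR i) alpha /\ 0 <= b i.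

Definition H2 (a b : nat -> R) : Prop :=
  (exists la, 0 < la /\ forall i, (1 <= i)%nat -> la <= a i) /\
  (exists lb, 0 < lb /\ forall i, (1 <= i)%nat -> lb <= b i).

Definition H3 (a b : nat -> R) : Prop :=
  is_lim_seq (fun i => Qc a b (S i) / Qc a b i) (Rbar_inv_ext (z_s a b)).

Definition H4 (a : nat -> R) : Prop :=
  exists l, 0 < l /\ is_lim_seq (fun i => a (S i) / a i) l.

(* Infinitely many steady states: an injective family (as sequences indexed by i >= 1). *)
Definition infinitely_many_steady (a b : nat -> R) (lam : R) : Prop :=
  exists f : nat -> nat -> R,
    (forall n, steady_state a b lam (f n)) /\
    (forall n m, n <> m -> exists i, (1 <= i)%nat /\ f n i <> f m i).

From Stdlib Require Import Reals Lra Lia.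
From Coquelicot Require Import Coquelicot.
Open Scope R_scope.

(* In a steady state all fluxes J_i equal J := J_1, and the sign of J decides everything.
   J > 0 is impossible: J <= a_i C_1 C_i while a_i C_i -> 0.  J = 0 is detailed balance,
   C_i = Q_i C_1^i, so F(C_1) = lambda and C_1 <= z_s, whence lambda <= lambda_s.  J < 0 forces
   a_(i+1) C_(i+1) >= |J| a_(i+1) / b_(i+1), which is not summable when b_i <= i a_i (harmonic
   series) nor when z_s < oo (then (H3) and (H4) bound a_(i+1) / b_(i+1) below); and
   lambda > lambda_s forces z_s < oo because F(z) >= a_1 z^2.
   F is strictly increasing, lower semicontinuous, and continuous inside the disc of convergence,
   so for lambda <= lambda_s the supremum of {z <= z_s | F(z) <= lambda} solves F(z) = lambda.
   When b_i > i^nu a_i, the profile D with D_1 = 0 and all fluxes -1 has a_i D_i = O(i^-nu)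
   summable, and Q_i x^i + c D_i, for x < z and the c matching the source lambda, is a steady
   state for every such x. *)

Lemma sum_n_succ (v : nat -> R) (n : nat) : sum_n v (S n) = sum_n v n + v (S n).
Proof. rewrite sum_Sn; reflexivity. Qed.

Lemma sum_n_nonneg (v : nat -> R) :
  (forall j, 0 <= v j) -> forall n, 0 <= sum_n v n.
Proof.
  intros Hv n; induction n as [|n IH].
  - rewrite sum_O; apply Hv.
  - rewrite sum_n_succ; specialize (Hv (S n)); lra.
Qed.

Lemma sum_n_le_succ (v : nat -> R) :
  (forall j, 0 <= v j) -> forall n, sum_n v n <= sum_n v (S n).
Proof. intros Hv n; rewrite sum_n_succ; specialize (Hv (S n)); lra. Qed.

Lemma is_series_term_le (v : nat -> R) (l : R) (j : nat) :
  (forall n, 0 <= v n) -> is_series v l -> v j <= l.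
Proof.
  intros Hv Hl.
  pose proof (is_lim_seq_incr_compare _ l Hl (sum_n_le_succ v Hv) j) as Hj.
  destruct j as [|j]; [rewrite sum_O in Hj; exact Hj|].
  rewrite sum_n_succ in Hj.
  pose proof (sum_n_nonneg v Hv j); lra.
Qed.

Lemma is_series_zero : is_series (fun _ : nat => 0) 0.
Proof.
  change (is_lim_seq (sum_n (fun _ : nat => 0)) 0).
  apply (is_lim_seq_ext (fun _ => 0)); [|apply is_lim_seq_const].
  intro n; rewrite sum_n_const; ring.
Qed.

Lemma ex_series_of_bounded_sums (v : nat -> R) (M : R) :
  (forall n, 0 <= v n) -> (forall n, sum_n v n <= M) -> ex_series v.
Proof.
  intros Hv HM; destruct (growing_cv (sum_n v)) as [l Hl].
  - exact (sum_n_le_succ v Hv).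
  - exists M; intros x [n ->]; apply HM.
  - exists l; apply is_lim_seq_Reals; exact Hl.
Qed.

Lemma ln_le_sub_1 (y : R) : 0 < y -> ln y <= y - 1.
Proof. intro Hy; pose proof (exp_ineq1_le (ln y)) as E; rewrite exp_ln in E; lra. Qed.

Lemma INR_S_pos (n : nat) : 0 < INR (S n).
Proof. apply lt_0_INR; lia. Qed.

Lemma ln_le_harmonic_sum (n : nat) :
  ln (INR (S (S n))) <= sum_n (fun k => / INR (S k)) n.
Proof.
  induction n as [|n IH].
  - rewrite sum_O; pose proof (ln_le_sub_1 2 ltac:(lra)).
    replace (INR 2) with 2 by (simpl; lra); replace (INR 1) with 1 by reflexivity; lra.
  - rewrite sum_n_succ.
    pose proof (INR_S_pos (S n)) as Hn.
    assert (Hq : 0 < INR (S (S (S n))) / INR (S (S n)))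
      by (apply Rdiv_lt_0_compat; [apply INR_S_pos|exact Hn]).
    assert (Hsplit : ln (INR (S (S (S n))))
                     = ln (INR (S (S n))) + ln (INR (S (S (S n))) / INR (S (S n)))).
    { rewrite ln_div; [ring|apply INR_S_pos|exact Hn]. }
    assert (Hstep : INR (S (S (S n))) / INR (S (S n)) - 1 = / INR (S (S n))).
    { rewrite (S_INR (S (S n))); field; lra. }
    pose proof (ln_le_sub_1 _ Hq); lra.
Qed.

Lemma not_ex_series_harmonic : ~ ex_series (fun n => / INR (S n)).
Proof.
  intros [l Hl].
  assert (Hle : forall n, sum_n (fun k => / INR (S k)) n <= l).
  { apply (is_lim_seq_incr_compare _ l Hl), sum_n_le_succ.
    intro j; apply Rlt_le, Rinv_0_lt_compat, INR_S_pos. }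
  destruct (INR_unbounded (exp l)) as [n Hn].
  assert (l < ln (INR (S (S n)))).
  { rewrite <- (ln_exp l); apply ln_increasing; [apply exp_pos|].
    apply Rlt_le_trans with (INR n); [lra|apply le_INR; lia]. }
  pose proof (ln_le_harmonic_sum n); pose proof (Hle n); lra.
Qed.

Lemma not_ex_series_of_harmonic_minorant (v : nat -> R) (c : R) (N : nat) :
  0 < c -> (forall k, (N <= k)%nat -> c / INR (S k) <= v k) -> ~ ex_series v.
Proof.
  intros Hc Hv Hex; apply not_ex_series_harmonic.
  apply (ex_series_incr_n _ N); apply (ex_series_incr_n _ N) in Hex.
  assert (Hmin : ex_series (fun k => c / INR (S (N + k)))).
  { apply (@ex_series_le R_AbsRing R_CompleteNormedModule) with (2 := Hex); intro k.
    change (norm _) with (Rabs (c / INR (S (N + k)))).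
    rewrite Rabs_pos_eq; [apply Hv; lia|].
    apply Rlt_le, Rdiv_lt_0_compat; [exact Hc|apply INR_S_pos]. }
  apply (ex_series_scal (/ c)) in Hmin; eapply ex_series_ext; [|exact Hmin].
  intro k; pose proof (INR_S_pos (N + k)).
  change (/ c * (c / INR (S (N + k))) = / INR (S (N + k))); field; lra.
Qed.

Lemma Rpower_1_l (y : R) : Rpower 1 y = 1.
Proof. unfold Rpower; rewrite ln_1, Rmult_0_r, exp_0; reflexivity. Qed.

Lemma Rpower_opp_le (x y nu : R) :
  0 < x <= y -> 0 <= nu -> Rpower y (- nu) <= Rpower x (- nu).
Proof.
  intros Hxy Hnu; rewrite !Rpower_Ropp.
  apply Rinv_le_contravar; [apply exp_pos|apply Rle_Rpower_l; lra].
Qed.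

Lemma Rpower_opp_le_inv (i : nat) (nu : R) :
  (1 <= i)%nat -> 1 <= nu -> Rpower (INR i) (- nu) <= / INR i.
Proof.
  intros Hi Hnu; rewrite Rpower_Ropp.
  apply Rinv_le_contravar; [apply lt_0_INR; lia|].
  assert (H1 : 1 <= INR i) by (apply (le_INR 1); exact Hi).
  rewrite <- (Rpower_1 (INR i)) at 1 by lra; apply Rle_Rpower; lra.
Qed.

(* Telescoping against the antiderivative [y ^ (1 - nu) / (1 - nu)] of [y ^ - nu]. *)
Lemma ex_series_Rpower_opp (nu : R) :
  1 < nu -> ex_series (fun n => Rpower (INR (S n)) (- nu)).
Proof.
  intro Hnu; set (t := nu - 1); assert (Ht : 0 < t) by (unfold t; lra).
  set (f := fun y => Rpower y (- t)).
  assert (Hstep : forall n, Rpower (INR (S (S n))) (- nu)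
                            <= / t * (f (INR (S n)) - f (INR (S (S n))))).
  { intro n; pose proof (INR_S_pos n).
    assert (Hlt : INR (S n) < INR (S (S n))) by (rewrite (S_INR (S n)); lra).
    destruct (MVT_cor2 f (fun y => - t * Rpower y (- t - 1)) _ _ Hlt) as [c [Hmvt Hc]].
    { intros y Hy; apply derivable_pt_lim_power; lra. }
    rewrite (S_INR (S n)) in Hmvt at 2.
    replace (INR (S n) + 1 - INR (S n)) with 1 in Hmvt by ring.
    replace (- t - 1) with (- nu) in Hmvt by (unfold t; ring).
    pose proof (Rpower_opp_le c (INR (S (S n))) nu ltac:(lra) ltac:(lra)).
    apply Rmult_le_reg_l with t; [exact Ht|].
    rewrite <- Rmult_assoc, Rinv_r, Rmult_1_l by lra; nra. }
  assert (Hsum : forall n, sum_n (fun n => Rpower (INR (S n)) (- nu)) n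
                           <= 1 + / t * (1 - f (INR (S n)))).
  { induction n as [|n IH].
    - rewrite sum_O; unfold f; simpl INR; rewrite !Rpower_1_l; lra.
    - rewrite sum_n_succ; specialize (Hstep n).
      replace (f (INR (S n)) - f (INR (S (S n))))
        with ((1 - f (INR (S (S n)))) - (1 - f (INR (S n)))) in Hstep by ring.
      lra. }
  apply ex_series_of_bounded_sums with (1 + / t).
  - intro n; apply Rlt_le, exp_pos.
  - intro n; specialize (Hsum n).
    assert (0 < f (INR (S n))) by apply exp_pos.
    assert (0 < / t) by (apply Rinv_0_lt_compat; exact Ht).
    nra.
Qed.

Lemma continuity_pt_ball (f : R -> R) (x eps : R) :
  continuity_pt f x -> 0 < eps ->
  exists d, 0 < d /\ forall y, Rabs (y - x) < d -> Rabs (f y - f x) < eps.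
Proof.
  intros Hf Heps; destruct (Hf eps Heps) as [d [Hd Hy]]; exists d; split; [exact Hd|].
  intros y Hyx; destruct (Req_dec y x) as [->|Hne].
  - unfold Rminus; rewrite Rplus_opp_r, Rabs_R0; exact Heps.
  - apply Hy; split; [split; [exact I|congruence]|exact Hyx].
Qed.

Lemma is_lim_seq_gt (u : nat -> R) (l : Rbar) (c : R) :
  is_lim_seq u l -> Rbar_lt c l -> exists n, c < u n.
Proof.
  intros Hl Hc; apply is_lim_seq_spec in Hl; destruct l as [l| |]; simpl in *.
  - assert (He : 0 < l - c) by lra; destruct (Hl (mkposreal _ He)) as [N HN].
    specialize (HN N (le_n _)); simpl in HN; apply Rabs_def2 in HN; exists N; lra.
  - destruct (Hl c) as [N HN]; exists N; apply HN; lia.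
  - contradiction.
Qed.

Lemma not_ex_series_of_pos_minorant (v : nat -> R) (eps : R) (N : nat) :
  0 < eps -> (forall k, (N <= k)%nat -> eps <= v k) -> ~ ex_series v.
Proof.
  intros Heps Hv Hex; apply ex_series_lim_0, is_lim_seq_spec in Hex.
  destruct (Hex (mkposreal eps Heps)) as [N' HN'].
  specialize (HN' (max N N') ltac:(lia)); specialize (Hv (max N N') ltac:(lia)).
  simpl in HN'; rewrite Rminus_0_r in HN'; apply Rabs_def2 in HN'; lra.
Qed.

Lemma damped_recursion_bounded (w r : nat -> R) (x : R) (K : nat) : 0 <= x ->
  (forall i, (K <= i)%nat -> 0 <= r i <= / (2 * x + 2) /\ w (S i) = r i * (x * w i + 1)) ->
  forall i, (K <= i)%nat -> w i <= Rmax (w K) 2.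
Proof.
  intros Hx Hrec i Hi; induction Hi as [|i Hi IH]; [apply Rmax_l|].
  destruct (Hrec i Hi) as [[Hr0 Hr1] ->].
  set (M := Rmax (w K) 2) in *; assert (HM : 2 <= M) by apply Rmax_r.
  assert (Hq : r i * (2 * x + 2) <= 1).
  { apply Rmult_le_reg_r with (/ (2 * x + 2)); [apply Rinv_0_lt_compat; lra|].
    rewrite Rmult_assoc, Rinv_r, Rmult_1_r, Rmult_1_l by lra; exact Hr1. }
  assert (0 <= r i * x) by nra.
  apply Rle_trans with (r i * (x * M + 1)); [apply Rmult_le_compat_l; nra|nra].
Qed.

Section Coefficients.

Variables a b : nat -> R.
Hypothesis Hab : H2 a b.

Lemma a_pos (i : nat) : (1 <= i)%nat -> 0 < a i.
Proof. destruct Hab as [[la [Hla Ha]] _]; intro Hi; specialize (Ha i Hi); lra. Qed.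

Lemma b_pos (i : nat) : (1 <= i)%nat -> 0 < b i.
Proof. destruct Hab as [_ [lb [Hlb Hb]]]; intro Hi; specialize (Hb i Hi); lra. Qed.

Lemma Qc_SS (k : nat) : Qc a b (S (S k)) = Qc a b (S k) * a (S k) / b (S (S k)).
Proof. reflexivity. Qed.

Lemma Qc_pos (i : nat) : 0 < Qc a b i.
Proof.
  induction i as [|[|k] IH]; try (simpl; lra).
  rewrite Qc_SS; apply Rdiv_lt_0_compat; [apply Rmult_lt_0_compat|]; auto.
  - apply a_pos; lia.
  - apply b_pos; lia.
Qed.

Definition Fz_term (z : R) (j : nat) : R := a (S j) * Qc a b (S j) * z ^ (S j + 1).

Definition Fz_series (z : R) : Rbar := Lim_seq (sum_n (Fz_term z)).

Lemma Fz_split (z : R) : Fz a b z = Rbar_plus (Fz_series z) (a 1%nat * z ^ 2).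
Proof. reflexivity. Qed.

Lemma Fz_term_nonneg (z : R) (j : nat) : 0 <= z -> 0 <= Fz_term z j.
Proof.
  intro Hz; unfold Fz_term; apply Rmult_le_pos; [|apply pow_le; exact Hz].
  apply Rmult_le_pos; apply Rlt_le; [apply a_pos; lia|apply Qc_pos].
Qed.

Lemma Fz_series_is_lim (z : R) :
  0 <= z -> is_lim_seq (sum_n (Fz_term z)) (Fz_series z).
Proof.
  intro Hz; apply Lim_seq_correct, ex_lim_seq_incr, sum_n_le_succ.
  intro j; apply Fz_term_nonneg, Hz.
Qed.

Lemma Fz_series_ge_partial (z : R) (n : nat) :
  0 <= z -> Rbar_le (sum_n (Fz_term z) n) (Fz_series z).
Proof.
  intro Hz; rewrite <- (Lim_seq_const (sum_n (Fz_term z) n)); apply Lim_seq_le_loc.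
  exists n; intros m Hm; induction Hm as [|m Hm IH]; [lra|].
  pose proof (sum_n_le_succ _ (fun j => Fz_term_nonneg z j Hz) m); lra.
Qed.

Lemma Fz_series_nonneg (z : R) : 0 <= z -> Rbar_le 0 (Fz_series z).
Proof.
  intro Hz; eapply Rbar_le_trans; [|exact (Fz_series_ge_partial z 0 Hz)].
  apply sum_n_nonneg; intro j; apply Fz_term_nonneg, Hz.
Qed.

Lemma Fz_series_mono (z1 z2 : R) :
  0 <= z1 <= z2 -> Rbar_le (Fz_series z1) (Fz_series z2).
Proof.
  intro Hz; apply Lim_seq_le_loc; exists 0%nat; intros n _.
  unfold sum_n; apply sum_n_m_le; intro j; unfold Fz_term; apply Rmult_le_compat_l.
  - apply Rmult_le_pos; apply Rlt_le; [apply a_pos; lia|apply Qc_pos].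
  - apply pow_incr; exact Hz.
Qed.

Lemma Fz_partial_le (z : R) (n : nat) :
  0 <= z -> Rbar_le (sum_n (Fz_term z) n + a 1%nat * z ^ 2) (Fz a b z).
Proof.
  intro Hz; rewrite Fz_split; pose proof (Fz_series_ge_partial z n Hz).
  destruct (Fz_series z); simpl in *; auto; lra.
Qed.

Lemma Fz_series_finite (z l : R) :
  Fz a b z = Finite l -> Fz_series z = Finite (l - a 1%nat * z ^ 2).
Proof.
  rewrite Fz_split; destruct (Fz_series z) as [g| |]; simpl; intro E; try discriminate.
  injection E as <-; f_equal; ring.
Qed.

Lemma Fz_finite_is_series (z l : R) :
  0 <= z -> Fz a b z = Finite l -> is_series (Fz_term z) (l - a 1%nat * z ^ 2).
Proof.
  intros Hz E; pose proof (Fz_series_is_lim z Hz) as Hlim.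
  rewrite (Fz_series_finite z l E) in Hlim; exact Hlim.
Qed.

Lemma Fz_is_series (z g : R) :
  is_series (Fz_term z) g -> Fz a b z = Finite (g + a 1%nat * z ^ 2).
Proof.
  intro Hg; rewrite Fz_split; unfold Fz_series.
  rewrite (is_lim_seq_unique (sum_n (Fz_term z)) g Hg); reflexivity.
Qed.

Lemma Fz_0 : Fz a b 0 = Finite 0.
Proof.
  replace 0 with (0 + a 1%nat * 0 ^ 2) at 2 by ring; apply Fz_is_series.
  eapply is_series_ext; [|exact is_series_zero]; intro j.
  unfold Fz_term; rewrite Nat.add_1_r; simpl; ring.
Qed.

Lemma Fz_ge_quadratic (z : R) : 0 <= z -> Rbar_le (a 1%nat * z ^ 2) (Fz a b z).
Proof.
  intro Hz; rewrite Fz_split; pose proof (Fz_series_nonneg z Hz).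
  destruct (Fz_series z); simpl in *; auto; lra.
Qed.

Lemma Fz_mono (z1 z2 : R) : 0 <= z1 <= z2 -> Rbar_le (Fz a b z1) (Fz a b z2).
Proof.
  intro Hz; rewrite !Fz_split.
  pose proof (Fz_series_mono z1 z2 Hz); pose proof (Fz_series_nonneg z1 ltac:(lra)).
  assert (a 1%nat * z1 ^ 2 <= a 1%nat * z2 ^ 2).
  { apply Rmult_le_compat_l; [apply Rlt_le, a_pos; lia|apply pow_incr; lra]. }
  destruct (Fz_series z1), (Fz_series z2); simpl in *; auto; try contradiction; lra.
Qed.

Lemma Fz_sublevel_bounded (z lam : R) : 0 <= z -> 0 <= lam ->
  Rbar_le (Fz a b z) (Finite lam) -> z <= 1 + lam / a 1%nat.
Proof.
  intros Hz Hlam HFz; pose proof (a_pos 1 (le_n 1)) as Ha1.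
  pose proof (Rbar_le_trans _ _ _ (Fz_ge_quadratic z Hz) HFz) as Hq; simpl in Hq.
  assert (0 <= lam / a 1%nat) by (apply Rdiv_le_0_compat; lra).
  destruct (Rle_dec z 1); [lra|].
  assert (z <= lam / a 1%nat); [|lra].
  apply Rmult_le_reg_l with (a 1%nat); [lra|]; field_simplify; nra.
Qed.

Lemma Fz_strict_mono (z1 z2 l2 : R) : 0 <= z1 < z2 -> Fz a b z2 = Finite l2 ->
  exists l1, Fz a b z1 = Finite l1 /\ l1 < l2.
Proof.
  intros Hz E; pose proof (Fz_series_finite z2 l2 E) as E2.
  pose proof (Fz_series_mono z1 z2 ltac:(lra)) as Hmono; rewrite E2 in Hmono.
  pose proof (Fz_series_nonneg z1 ltac:(lra)) as Hnonneg.
  destruct (Fz_series z1) as [g1| |] eqn:E1; simpl in Hmono, Hnonneg; try contradiction.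
  exists (g1 + a 1%nat * z1 ^ 2); split; [rewrite Fz_split, E1; reflexivity|].
  pose proof (a_pos 1 (le_n 1)); assert (z1 * z1 < z2 * z2) by nra; simpl; nra.
Qed.

Lemma Fz_inj (z1 z2 l : R) : 0 <= z1 -> 0 <= z2 ->
  Fz a b z1 = Finite l -> Fz a b z2 = Finite l -> z1 = z2.
Proof.
  intros Hz1 Hz2 E1 E2; destruct (Rtotal_order z1 z2) as [Hlt|[Heq|Hgt]]; [exfalso| |exfalso]; auto.
  - destruct (Fz_strict_mono z1 z2 l ltac:(lra) E2) as [l1 [E Hl]].
    rewrite E1 in E; injection E; lra.
  - destruct (Fz_strict_mono z2 z1 l ltac:(lra) E1) as [l1 [E Hl]].
    rewrite E2 in E; injection E; lra.
Qed.

Lemma continuity_pt_Fz_partial (n : nat) (z : R) :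
  continuity_pt (fun z => sum_n (Fz_term z) n + a 1%nat * z ^ 2) z.
Proof.
  apply continuity_pt_plus with (f2 := fun z => a 1%nat * z ^ 2); [|reg].
  induction n as [|n IH].
  - apply continuity_pt_ext with (f := fun z => Fz_term z 0); [intro; rewrite sum_O; reflexivity|].
    unfold Fz_term; reg.
  - apply continuity_pt_ext with (f := fun z => sum_n (Fz_term z) n + Fz_term z (S n)).
    { intro; rewrite sum_n_succ; reflexivity. }
    apply continuity_pt_plus; [exact IH|unfold Fz_term; reg].
Qed.

Lemma Fz_inside_radius (z : R) : 0 <= z -> Rbar_lt z (z_s a b) ->
  Fz a b z = Finite (z * PSeries (zs_coef a b) z + a 1%nat * z ^ 2).
Proof.
  intros Hz Hin; apply Fz_is_series.
  assert (Hex : ex_pseries (zs_coef a b) z) by (apply CV_radius_inside; rewrite Rabs_pos_eq; auto).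
  assert (Hp : is_series (fun k => scal (pow_n z (S k)) (zs_coef a b (S k)))
                        (PSeries (zs_coef a b) z)).
  { apply (is_series_incr_1 (fun k => scal (pow_n z k) (zs_coef a b k))).
    unfold plus, scal; simpl; unfold mult, plus; simpl; rewrite Rmult_0_r, Rplus_0_r.
    exact (PSeries_correct _ _ Hex). }
  apply (is_series_scal z) in Hp; eapply is_series_ext; [|exact Hp]; intro j.
  cbv beta; rewrite pow_n_pow; unfold scal; simpl; unfold mult; simpl.
  unfold Fz_term; rewrite Nat.add_1_r; simpl; ring.
Qed.

Lemma continuity_pt_Fz_inside (z : R) : 0 <= z -> Rbar_lt z (z_s a b) ->
  continuity_pt (fun z => z * PSeries (zs_coef a b) z + a 1%nat * z ^ 2) z.
Proof.
  intros Hz Hin; apply continuity_pt_plus with (f2 := fun z => a 1%nat * z ^ 2); [|reg].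
  apply continuity_pt_mult; [apply continuity_pt_id|].
  apply PSeries_continuity; rewrite Rabs_pos_eq; auto.
Qed.

Lemma lambda_s_is_lub : Rbar_is_lub
  (fun y => exists z, 0 <= z /\ Rbar_le (Finite z) (z_s a b) /\ y = Fz a b z) (lambda_s a b).
Proof. exact (proj2_sig (Rbar_ex_lub _)). Qed.

Lemma Fz_le_lambda_s (z : R) :
  0 <= z -> Rbar_le (Finite z) (z_s a b) -> Rbar_le (Fz a b z) (lambda_s a b).
Proof. intros Hz Hzs; apply lambda_s_is_lub; exists z; auto. Qed.

Lemma lambda_s_le_Fz (m : R) :
  0 <= m -> Rbar_le (z_s a b) (Finite m) -> Rbar_le (lambda_s a b) (Fz a b m).
Proof.
  intros Hm Hzs; apply lambda_s_is_lub; intros y [z [Hz [Hzz ->]]].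
  apply Fz_mono; split; [exact Hz|].
  exact (Rbar_le_trans (Finite z) _ (Finite m) Hzz Hzs).
Qed.

(* [Fz] is the supremum of the continuous partial sums, hence lower semicontinuous. *)
Lemma Fz_le_of_left_approx (m lam : R) : 0 <= m ->
  (forall d, 0 < d -> exists z, m - d < z <= m /\ 0 <= z /\ Rbar_le (Fz a b z) (Finite lam)) ->
  Rbar_le (Fz a b m) (Finite lam).
Proof.
  intros Hm Happrox.
  destruct (Rbar_le_lt_dec (Fz a b m) (Finite lam)) as [Hle|Hgt]; [exact Hle|exfalso].
  assert (Hser : Rbar_lt (lam - a 1%nat * m ^ 2) (Fz_series m)).
  { rewrite Fz_split in Hgt; destruct (Fz_series m); simpl in *; auto; lra. }
  destruct (is_lim_seq_gt _ _ _ (Fz_series_is_lim m Hm) Hser) as [n Hn].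
  set (h := fun z => sum_n (Fz_term z) n + a 1%nat * z ^ 2).
  destruct (continuity_pt_ball h m (h m - lam) (continuity_pt_Fz_partial n m))
    as [d [Hd Hh]]; [unfold h; lra|].
  destruct (Happrox d Hd) as [z [Hzm [Hz HFz]]].
  assert (Hhz : lam < h z).
  { assert (Habs : Rabs (z - m) < d) by (rewrite Rabs_left1; lra).
    specialize (Hh z Habs); apply Rabs_def2 in Hh; lra. }
  pose proof (Rbar_le_trans _ _ _ (Fz_partial_le z n Hz) HFz) as Hle.
  simpl in Hle; unfold h in Hhz; lra.
Qed.

Lemma Fz_below_right (m f lam : R) : 0 <= m -> Rbar_lt (Finite m) (z_s a b) ->
  Fz a b m = Finite f -> f < lam ->
  exists z, m < z /\ Rbar_le (Finite z) (z_s a b) /\ Rbar_le (Fz a b z) (Finite lam).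
Proof.
  intros Hm Hin Hf Hlt.
  set (F := fun z => z * PSeries (zs_coef a b) z + a 1%nat * z ^ 2).
  assert (HFm : F m = f) by (rewrite Fz_inside_radius in Hf by auto; injection Hf; auto).
  destruct (continuity_pt_ball F m (lam - f) (continuity_pt_Fz_inside m Hm Hin))
    as [d [Hd HF]]; [lra|].
  assert (Hroom : exists e, 0 < e < d /\ Rbar_lt (Finite (m + e)) (z_s a b)).
  { destruct (z_s a b) as [r| |]; simpl in Hin; [|exists (d / 2); simpl; lra|contradiction].
    exists (Rmin (d / 2) ((r - m) / 2)); simpl.
    pose proof (Rmin_l (d / 2) ((r - m) / 2)); pose proof (Rmin_r (d / 2) ((r - m) / 2)).
    assert (0 < Rmin (d / 2) ((r - m) / 2)) by (apply Rmin_pos; lra); lra. }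
  destruct Hroom as [e [He Hme]].
  exists (m + e); split; [lra|split; [apply Rbar_lt_le, Hme|]].
  rewrite Fz_inside_radius by (lra || exact Hme); simpl.
  specialize (HF (m + e) ltac:(rewrite Rabs_pos_eq; lra)); apply Rabs_def2 in HF.
  unfold F in *; lra.
Qed.

Lemma Fz_attains (lam : R) : 0 <= lam -> Rbar_le (Finite lam) (lambda_s a b) ->
  exists z, 0 <= z /\ Rbar_le (Finite z) (z_s a b) /\ Fz a b z = Finite lam.
Proof.
  intros Hlam Hls.
  set (E := fun z => 0 <= z /\ Rbar_le (Finite z) (z_s a b) /\ Rbar_le (Fz a b z) (Finite lam)).
  assert (HE0 : E 0).
  { split; [lra|split; [apply CV_radius_ge_0|rewrite Fz_0; simpl; exact Hlam]]. }
  assert (Hbound : bound E).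
  { exists (1 + lam / a 1%nat); intros z [Hz [_ HFz]].
    exact (Fz_sublevel_bounded z lam Hz Hlam HFz). }
  destruct (completeness E Hbound (ex_intro _ 0 HE0)) as [m [Hub Hleast]].
  assert (Hm : 0 <= m) by (apply Hub, HE0).
  assert (Hmzs : Rbar_le (Finite m) (z_s a b)).
  { assert (Hzs : forall z, E z -> Rbar_le (Finite z) (z_s a b)) by (intros z Hz; apply Hz).
    clearbody E; destruct (z_s a b) as [r| |]; simpl.
    - apply Hleast; intros z Hz; exact (Hzs z Hz).
    - exact I.
    - exact (Hzs 0 HE0). }
  assert (HFm : Rbar_le (Fz a b m) (Finite lam)).
  { apply Fz_le_of_left_approx; [exact Hm|]; intros d Hd.
    destruct (Classical_Prop.classic (exists z, E z /\ m - d < z)) as [[z [Hz Hzd]]|Hnone].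
    - exists z; pose proof (Hub z Hz); destruct Hz as [Hz0 [_ HFz]]; auto.
    - exfalso; assert (m <= m - d); [|lra].
      apply Hleast; intros z Hz; apply Rnot_lt_le; intro; apply Hnone; eauto. }
  exists m; split; [exact Hm|split; [exact Hmzs|]].
  pose proof (Fz_ge_quadratic m Hm) as Hge.
  destruct (Fz a b m) as [f| |] eqn:Hf; simpl in HFm, Hge; try contradiction.
  destruct (Rle_lt_or_eq_dec f lam HFm) as [Hflt| ->]; [exfalso|reflexivity].
  destruct (Rbar_lt_le_dec (Finite m) (z_s a b)) as [Hin|Hzs].
  - destruct (Fz_below_right m f lam Hm Hin Hf Hflt) as [z [Hmz [Hz HFz]]].
    assert (z <= m) by (apply Hub; split; [lra|auto]); lra.
  - pose proof (Rbar_le_trans _ _ _ Hls (lambda_s_le_Fz m Hm Hzs)) as Hle.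
    rewrite Hf in Hle; simpl in Hle; lra.
Qed.

Lemma z_s_ge_of_ex_series (x : R) : 0 <= x ->
  ex_series (fun j => a (S j) * (Qc a b (S j) * x ^ S j)) -> Rbar_le (Finite x) (z_s a b).
Proof.
  intros Hx Hex; unfold z_s, CV_radius.
  rewrite <- (Rabs_pos_eq x Hx); apply (proj1 (Lub_Rbar_correct (CV_disk (zs_coef a b)))).
  apply ex_series_incr_1; eapply ex_series_ext; [|exact Hex]; intro j; cbv beta.
  pose proof (a_pos (S j) ltac:(lia)); pose proof (Qc_pos (S j)); pose proof (pow_le x (S j) Hx).
  change (zs_coef a b (S j)) with (a (S j) * Qc a b (S j)).
  rewrite (Rabs_pos_eq x Hx), Rabs_pos_eq; [symmetry; apply Rmult_assoc|].
  apply Rmult_le_pos; [apply Rmult_le_pos|]; lra.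
Qed.

Lemma ex_series_profile_of_Fz (z l : R) : 0 <= z -> Fz a b z = Finite l ->
  ex_series (fun j => a (S j) * (Qc a b (S j) * z ^ S j)).
Proof.
  intros Hz E; destruct (Req_dec z 0) as [->|Hz0].
  - exists 0; eapply is_series_ext; [|exact is_series_zero]; intro j; simpl; ring.
  - pose proof (Fz_finite_is_series z l Hz E) as Hs; apply (is_series_scal (/ z)) in Hs.
    eexists; eapply is_series_ext; [|exact Hs]; intro j; cbv beta.
    unfold scal; simpl; unfold mult; simpl; unfold Fz_term; rewrite Nat.add_1_r; simpl.
    field; exact Hz0.
Qed.

Lemma Jflux_detailed_balance (z : R) (k : nat) :
  (1 <= k)%nat -> Jflux a b (fun i => Qc a b i * z ^ i) k = 0.
Proof.
  intro Hk; destruct k as [|k]; [lia|]; unfold Jflux; rewrite Qc_SS.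
  pose proof (b_pos (S (S k)) ltac:(lia)); simpl; field; lra.
Qed.

Lemma detailed_balance_steady (lam z : R) : 0 <= z -> Fz a b z = Finite lam ->
  steady_state a b lam (fun i => Qc a b i * z ^ i).
Proof.
  intros Hz E; split; [|split; [|split]].
  - intros i _; apply Rmult_le_pos; [apply Rlt_le, Qc_pos|apply pow_le, Hz].
  - exact (ex_series_profile_of_Fz z lam Hz E).
  - rewrite (Series_ext _ (Fz_term z)), (is_series_unique _ _ (Fz_finite_is_series z lam Hz E)).
    + simpl; ring.
    + intro j; unfold Fz_term; rewrite Nat.add_1_r; simpl; ring.
  - intros i Hi; rewrite !Jflux_detailed_balance by lia; reflexivity.
Qed.

Lemma Jflux_const (lam : R) (C : nat -> R) : steady_state a b lam C ->
  forall i, (1 <= i)%nat -> Jflux a b C i = Jflux a b C 1.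
Proof.
  intros [_ [_ [_ HJ]]] i Hi; induction i as [|i IH]; [lia|].
  destruct (Nat.eq_dec i 0) as [->|Hne]; [reflexivity|].
  rewrite <- IH by lia; specialize (HJ (S i)); replace (S i - 1)%nat with i in HJ by lia.
  symmetry; apply HJ; lia.
Qed.

Lemma steady_flux_not_pos (lam : R) (C : nat -> R) :
  steady_state a b lam C -> ~ 0 < Jflux a b C 1.
Proof.
  intros Hs HJ; pose proof (Jflux_const lam C Hs) as Hconst.
  destruct Hs as [Hnonneg [Hsum _]]; set (J := Jflux a b C 1) in *.
  assert (Hbound : forall i, (1 <= i)%nat -> J <= a i * C 1%nat * C i).
  { intros i Hi; rewrite <- (Hconst i Hi); unfold Jflux.
    pose proof (Hnonneg (S i) ltac:(lia)); pose proof (b_pos (S i) ltac:(lia)); nra. }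
  assert (Hx : 0 < C 1%nat).
  { pose proof (Hbound 1%nat (le_n 1)); pose proof (Hnonneg 1%nat (le_n 1)).
    destruct (Req_dec (C 1%nat) 0) as [E|E]; [rewrite E in *; lra|lra]. }
  apply ex_series_lim_0, is_lim_seq_spec in Hsum.
  destruct (Hsum (mkposreal (J / C 1%nat) (Rdiv_lt_0_compat _ _ HJ Hx))) as [N HN].
  specialize (HN N (le_n N)); simpl in HN; rewrite Rminus_0_r in HN; apply Rabs_def2 in HN.
  specialize (Hbound (S N) ltac:(lia)).
  assert (J / C 1%nat <= a (S N) * C (S N)); [|lra].
  apply Rmult_le_reg_r with (C 1%nat); [exact Hx|]; field_simplify; lra.
Qed.

Lemma steady_outflux_lower_bound (lam : R) (C : nat -> R) : steady_state a b lam C ->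
  forall i, (1 <= i)%nat -> - Jflux a b C 1 * (a (S i) / b (S i)) <= a (S i) * C (S i).
Proof.
  intros Hs i Hi; pose proof (Jflux_const lam C Hs i Hi) as HJ; destruct Hs as [Hnonneg _].
  assert (HJi : a i * C 1%nat * C i - b (S i) * C (S i) = Jflux a b C 1) by exact HJ.
  pose proof (Hnonneg i Hi); pose proof (Hnonneg 1%nat (le_n 1)); pose proof (a_pos i Hi).
  pose proof (a_pos (S i) ltac:(lia)); pose proof (b_pos (S i) ltac:(lia)).
  assert (Hout : - Jflux a b C 1 <= b (S i) * C (S i)).
  { assert (0 <= a i * C 1%nat * C i) by (apply Rmult_le_pos; [apply Rmult_le_pos|]; lra); lra. }
  replace (a (S i) * C (S i)) with (a (S i) / b (S i) * (b (S i) * C (S i))) by (field; lra).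
  rewrite Rmult_comm; apply Rmult_le_compat_l; [apply Rdiv_le_0_compat; lra|exact Hout].
Qed.

Lemma steady_zero_flux_profile (lam : R) (C : nat -> R) : steady_state a b lam C ->
  Jflux a b C 1 = 0 -> forall i, (1 <= i)%nat -> C i = Qc a b i * C 1%nat ^ i.
Proof.
  intros Hs HJ0 i Hi; induction i as [|[|k] IH]; [lia|simpl; ring|].
  pose proof (Jflux_const lam C Hs (S k) ltac:(lia)) as HJ; rewrite HJ0 in HJ; unfold Jflux in HJ.
  rewrite IH in HJ by lia; pose proof (b_pos (S (S k)) ltac:(lia)).
  apply Rmult_eq_reg_l with (b (S (S k))); [|lra].
  transitivity (a (S k) * C 1%nat * (Qc a b (S k) * C 1%nat ^ S k)); [lra|].
  rewrite Qc_SS; simpl; field; lra.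
Qed.

Lemma steady_zero_flux (lam : R) (C : nat -> R) : steady_state a b lam C ->
  Jflux a b C 1 = 0 ->
  0 <= C 1%nat /\ Fz a b (C 1%nat) = Finite lam /\ Rbar_le (Finite (C 1%nat)) (z_s a b).
Proof.
  intros Hs HJ0; pose proof (steady_zero_flux_profile lam C Hs HJ0) as HC.
  destruct Hs as [Hnonneg [Hsum [Hbal _]]]; set (x := C 1%nat) in *.
  assert (Hx : 0 <= x) by apply (Hnonneg 1%nat (le_n 1)).
  assert (Hprof : ex_series (fun j => a (S j) * (Qc a b (S j) * x ^ S j))).
  { eapply ex_series_ext; [|exact Hsum]; intro j; cbv beta; rewrite HC by lia; reflexivity. }
  split; [exact Hx|split; [|exact (z_s_ge_of_ex_series x Hx Hprof)]].
  assert (Hterm : is_series (Fz_term x) (Series (fun j => a (S j) * x * C (S j)))).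
  { apply (is_series_ext (fun j => a (S j) * x * C (S j))).
    - intro j; unfold Fz_term; rewrite HC by lia; rewrite Nat.add_1_r; simpl; ring.
    - apply Series_correct; apply (ex_series_scal x) in Hsum.
      eapply ex_series_ext; [|exact Hsum]; intro j.
      unfold scal; simpl; unfold mult; simpl; ring. }
  rewrite (Fz_is_series x _ Hterm); f_equal; lra.
Qed.

(* The solution of the flux equations with [D 1 = 0] and every flux equal to [-1]. *)
Fixpoint outflux_profile (x : R) (n : nat) : R :=
  match n with
  | O => 0
  | S m => match m with
           | O => 0
           | S _ => (a m * x * outflux_profile x m + 1) / b n
           end
  end.

Lemma outflux_profile_SS (x : R) (k : nat) : outflux_profile x (S (S k))
  = (a (S k) * x * outflux_profile x (S k) + 1) / b (S (S k)).
Proof. reflexivity. Qed.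

Lemma outflux_profile_nonneg (x : R) : 0 <= x -> forall i, 0 <= outflux_profile x i.
Proof.
  intros Hx i; induction i as [|[|k] IH]; try (simpl; lra).
  rewrite outflux_profile_SS; apply Rdiv_le_0_compat; [|apply b_pos; lia].
  pose proof (a_pos (S k) ltac:(lia)).
  assert (0 <= a (S k) * x * outflux_profile x (S k))
    by (apply Rmult_le_pos; [apply Rmult_le_pos|]; lra).
  lra.
Qed.

Lemma Jflux_perturbed (x c : R) (k : nat) : (1 <= k)%nat ->
  Jflux a b (fun i => Qc a b i * x ^ i + c * outflux_profile x i) k = - c.
Proof.
  intro Hk; destruct k as [|k]; [lia|]; unfold Jflux; rewrite Qc_SS, outflux_profile_SS.
  change (Qc a b 1 * x ^ 1 + c * outflux_profile x 1) with (1 * x ^ 1 + c * 0).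
  pose proof (b_pos (S (S k)) ltac:(lia)); simpl; field; lra.
Qed.

Lemma perturbed_steady_state (lam x c T : R) : 0 <= x -> 0 <= c ->
  is_series (fun j => a (S j) * outflux_profile x (S j)) T ->
  Fz a b x = Finite (lam - c * x * T) ->
  steady_state a b lam (fun i => Qc a b i * x ^ i + c * outflux_profile x i).
Proof.
  intros Hx Hc HT E.
  pose proof (Fz_finite_is_series x _ Hx E) as HF.
  destruct (ex_series_profile_of_Fz x _ Hx E) as [P HP].
  assert (HxP : x * P = lam - c * x * T - a 1%nat * x ^ 2).
  { rewrite <- (is_series_unique _ _ HF); symmetry; apply is_series_unique.
    apply (is_series_scal x) in HP; eapply is_series_ext; [|exact HP]; intro j.
    unfold scal; simpl; unfold mult; simpl; unfold Fz_term; rewrite Nat.add_1_r; simpl; ring. }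
  assert (Hsum : is_series (fun j => a (S j)
                   * (Qc a b (S j) * x ^ S j + c * outflux_profile x (S j))) (P + c * T)).
  { apply (is_series_scal c) in HT; pose proof (is_series_plus _ _ _ _ HP HT) as Hs.
    eapply is_series_ext; [|exact Hs]; intro j.
    unfold plus, scal; simpl; unfold plus, mult; simpl; ring. }
  split; [|split; [|split]].
  - intros i _; pose proof (Qc_pos i); pose proof (outflux_profile_nonneg x Hx i).
    pose proof (pow_le x i Hx); apply Rplus_le_le_0_compat; apply Rmult_le_pos; lra.
  - exists (P + c * T); exact Hsum.
  - change (Qc a b 1 * x ^ 1 + c * outflux_profile x 1) with (1 * x ^ 1 + c * 0).
    rewrite (Series_ext _ (fun j => x * (a (S j)
               * (Qc a b (S j) * x ^ S j + c * outflux_profile x (S j))))) by (intro; ring).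
    rewrite Series_scal_l, (is_series_unique _ _ Hsum); simpl; nra.
  - intros i Hi; rewrite !Jflux_perturbed by lia; reflexivity.
Qed.

Lemma ratio_le_Rpower_opp (i : nat) (nu : R) : (1 <= i)%nat ->
  b i > Rpower (INR i) nu * a i -> a i / b i <= Rpower (INR i) (- nu).
Proof.
  intros Hi Hb; rewrite Rpower_Ropp.
  pose proof (a_pos i Hi); pose proof (b_pos i Hi).
  assert (Hp : 0 < Rpower (INR i) nu) by apply exp_pos.
  apply Rmult_le_reg_l with (Rpower (INR i) nu * b i); [nra|].
  replace (Rpower (INR i) nu * b i * (a i / b i)) with (Rpower (INR i) nu * a i) by (field; lra).
  replace (Rpower (INR i) nu * b i * / Rpower (INR i) nu) with (b i) by (field; lra); lra.
Qed.

Lemma ex_series_outflux_profile (x nu : R) (N : nat) : 0 <= x -> 1 < nu ->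
  (forall i, (N <= i)%nat -> b i > Rpower (INR i) nu * a i) ->
  ex_series (fun j => a (S j) * outflux_profile x (S j)).
Proof.
  intros Hx Hnu Hb.
  set (w := fun i => a i * outflux_profile x i); set (r := fun i => a (S i) / b (S i)).
  assert (Hw : forall i, (1 <= i)%nat -> 0 <= w i).
  { intros i Hi; apply Rmult_le_pos; [apply Rlt_le, a_pos, Hi|apply outflux_profile_nonneg, Hx]. }
  assert (Hr : forall i, 0 <= r i).
  { intro i; apply Rdiv_le_0_compat; [apply Rlt_le, a_pos|apply b_pos]; lia. }
  assert (Hrec : forall i, (1 <= i)%nat -> w (S i) = r i * (x * w i + 1)).
  { intros [|k] Hk; [lia|]; unfold w, r; rewrite outflux_profile_SS.
    pose proof (b_pos (S (S k)) ltac:(lia)); field; lra. }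
  assert (Hdecay : forall i, (N <= i)%nat -> r i <= Rpower (INR (S i)) (- nu))
    by (intros i Hi; apply ratio_le_Rpower_opp; [lia|apply Hb; lia]).
  destruct (INR_unbounded (2 * x + 2)) as [n0 Hn0]; set (K := max n0 (max N 1)).
  assert (HK : forall i, (K <= i)%nat ->
                 0 <= r i <= / (2 * x + 2) /\ w (S i) = r i * (x * w i + 1)).
  { intros i Hi; split; [split; [apply Hr|]|apply Hrec; lia].
    apply Rle_trans with (/ INR (S i)).
    - eapply Rle_trans; [apply Hdecay; lia|apply Rpower_opp_le_inv; lia || lra].
    - apply Rinv_le_contravar; [lra|]; apply Rlt_le, Rlt_le_trans with (INR n0); [lra|].
      apply le_INR; lia. }
  pose proof (damped_recursion_bounded w r x K Hx HK) as Hbounded.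
  set (M := Rmax (w K) 2) in *; assert (HM : 2 <= M) by apply Rmax_r.
  apply (ex_series_incr_n _ K).
  apply (@ex_series_le R_AbsRing R_CompleteNormedModule)
    with (b := fun k => (x * M + 1) * Rpower (INR (S (K + k))) (- nu)).
  - intro k; change (norm _) with (Rabs (w (S (K + k)))).
    rewrite Rabs_pos_eq by (apply Hw; lia); rewrite Hrec by lia.
    pose proof (Hbounded (K + k)%nat ltac:(lia)); pose proof (Hr (K + k)%nat).
    pose proof (Hdecay (K + k)%nat ltac:(lia)); pose proof (Hw (K + k)%nat ltac:(lia)).
    apply Rle_trans with (r (K + k)%nat * (x * M + 1)); [apply Rmult_le_compat_l; nra|].
    rewrite Rmult_comm; apply Rmult_le_compat_l; nra.
  - apply (ex_series_scal (x * M + 1) (fun k => Rpower (INR (S (K + k))) (- nu))).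
    apply (ex_series_incr_n (fun k => Rpower (INR (S k)) (- nu)) K), ex_series_Rpower_opp, Hnu.
Qed.

Lemma outflux_profile_2 (x : R) : outflux_profile x 2 = / b 2%nat.
Proof.
  rewrite outflux_profile_SS; change (outflux_profile x 1) with 0.
  pose proof (b_pos 2 ltac:(lia)); field; lra.
Qed.

Lemma infinitely_many_steady_pos (lam z : R) : 0 < lam -> 0 <= z -> Fz a b z = Finite lam ->
  (forall x, 0 <= x -> ex_series (fun j => a (S j) * outflux_profile x (S j))) ->
  infinitely_many_steady a b lam.
Proof.
  intros Hlam Hz HFz HD.
  assert (Hzp : 0 < z).
  { destruct (Req_dec z 0) as [E|E]; [rewrite E, Fz_0 in HFz; injection HFz; lra|lra]. }
  set (x := fun n : nat => z / INR (S (S n))).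
  assert (Hx : forall n, 0 < x n < z).
  { intro n; unfold x; pose proof (INR_S_pos (S n)); rewrite (S_INR (S n)).
    pose proof (INR_S_pos n); split; [apply Rdiv_lt_0_compat; lra|].
    apply Rmult_lt_reg_r with (INR (S n) + 1); [lra|]; field_simplify; nra. }
  set (T := fun n => Series (fun j => a (S j) * outflux_profile (x n) (S j))).
  set (c := fun n => (lam - real (Fz a b (x n))) / (x n * T n)).
  exists (fun n i => Qc a b i * x n ^ i + c n * outflux_profile (x n) i); split.
  - intro n; specialize (Hx n).
    destruct (Fz_strict_mono (x n) z lam ltac:(lra) HFz) as [Fx [HFx HFxlt]].
    assert (HT : is_series (fun j => a (S j) * outflux_profile (x n) (S j)) (T n))
      by (apply Series_correct, HD; lra).
    assert (HTpos : 0 < T n).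
    { assert (Hnn : forall j, 0 <= a (S j) * outflux_profile (x n) (S j)).
      { intro j; apply Rmult_le_pos; [apply Rlt_le, a_pos; lia|apply outflux_profile_nonneg; lra]. }
      eapply Rlt_le_trans; [|exact (is_series_term_le _ _ 1 Hnn HT)]; cbv beta.
      rewrite outflux_profile_2; pose proof (a_pos 2 ltac:(lia)); pose proof (b_pos 2 ltac:(lia)).
      apply Rmult_lt_0_compat, Rinv_0_lt_compat; lra. }
    apply perturbed_steady_state with (T n); [lra| |exact HT|].
    + unfold c; rewrite HFx; simpl; apply Rdiv_le_0_compat; [lra|apply Rmult_lt_0_compat; lra].
    + rewrite HFx; f_equal; unfold c; rewrite HFx; simpl; field; lra.
  - intros n m Hnm; exists 1%nat; split; [lia|].
    change (Qc a b 1) with 1; change (outflux_profile (x n) 1) with 0.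
    change (outflux_profile (x m) 1) with 0.
    intro E; apply Hnm; unfold x, Rdiv in E.
    rewrite !pow_1, !Rmult_1_l, !Rmult_0_r, !Rplus_0_r in E.
    assert (Hinv : / INR (S (S n)) = / INR (S (S m)))
      by (apply Rmult_eq_reg_l with z; [exact E|lra]).
    apply Rinv_eq_reg, INR_eq in Hinv; lia.
Qed.

Lemma infinitely_many_steady_zero :
  ex_series (fun j => a (S j) * outflux_profile 0 (S j)) -> infinitely_many_steady a b 0.
Proof.
  intro HD; exists (fun n i => Qc a b i * 0 ^ i + INR n * outflux_profile 0 i); split.
  - intro n.
    apply perturbed_steady_state with (Series (fun j => a (S j) * outflux_profile 0 (S j))).
    + lra.
    + apply pos_INR.
    + apply Series_correct, HD.
    + rewrite Fz_0; f_equal; ring.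
  - intros n m Hnm; exists 2%nat; split; [lia|].
    rewrite outflux_profile_2; pose proof (b_pos 2 ltac:(lia)).
    intro E; apply Hnm, INR_eq.
    apply Rmult_eq_reg_r with (/ b 2%nat); [|apply Rinv_neq_0_compat; lra].
    simpl in E; lra.
Qed.

Lemma infinitely_many_steady_states (lam z nu : R) (N : nat) : 0 <= lam -> 0 <= z ->
  Fz a b z = Finite lam -> 1 < nu -> (forall i, (N <= i)%nat -> b i > Rpower (INR i) nu * a i) ->
  infinitely_many_steady a b lam.
Proof.
  intros Hlam Hz HFz Hnu Hb.
  pose proof (fun x Hx => ex_series_outflux_profile x nu N Hx Hnu Hb) as HD.
  destruct (Rle_lt_or_eq_dec 0 lam Hlam) as [Hpos|<-].
  - exact (infinitely_many_steady_pos lam z Hpos Hz HFz HD).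
  - exact (infinitely_many_steady_zero (HD 0 (Rle_refl 0))).
Qed.

Lemma steady_state_unique (lam z : R) (N : nat) (C : nat -> R) :
  (forall i, (N <= i)%nat -> b i <= INR i * a i) -> 0 <= z -> Fz a b z = Finite lam ->
  steady_state a b lam C -> forall i, (1 <= i)%nat -> C i = Qc a b i * z ^ i.
Proof.
  intros Hb Hz HFz Hs i Hi.
  destruct (Rtotal_order (Jflux a b C 1) 0) as [Hneg|[Hzero|Hpos]].
  - exfalso; apply (not_ex_series_of_harmonic_minorant
                      (fun j => a (S j) * C (S j)) (- Jflux a b C 1) (max N 1)); [lra| |apply Hs].
    intros k Hk; eapply Rle_trans; [|apply (steady_outflux_lower_bound lam C Hs k); lia].
    unfold Rdiv; apply Rmult_le_compat_l; [lra|].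
    pose proof (Hb (S k) ltac:(lia)); pose proof (a_pos (S k) ltac:(lia)).
    pose proof (b_pos (S k) ltac:(lia)); pose proof (INR_S_pos k).
    apply Rmult_le_reg_l with (INR (S k) * b (S k)); [nra|].
    field_simplify; lra.
  - destruct (steady_zero_flux lam C Hs Hzero) as [Hx [HF _]].
    rewrite (steady_zero_flux_profile lam C Hs Hzero i Hi), (Fz_inj _ _ lam Hx Hz HF HFz).
    reflexivity.
  - exfalso; exact (steady_flux_not_pos lam C Hs Hpos).
Qed.

Lemma z_s_finite (lam : R) : 0 <= lam -> Rbar_lt (lambda_s a b) (Finite lam) ->
  exists r, z_s a b = Finite r.
Proof.
  intros Hlam Hlt; pose proof (a_pos 1 (le_n 1)) as Ha1.
  pose proof (CV_radius_ge_0 (zs_coef a b)) as Hge0; change (Rbar_le 0 (z_s a b)) in Hge0.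
  destruct (z_s a b) as [r| |] eqn:Hr; [eauto|exfalso|contradiction].
  set (z := 2 + lam / a 1%nat).
  assert (0 <= lam / a 1%nat) by (apply Rdiv_le_0_compat; lra).
  assert (Hz : 0 <= z) by (unfold z; lra).
  pose proof (Fz_le_lambda_s z Hz ltac:(rewrite Hr; exact I)) as Hub.
  pose proof (Fz_sublevel_bounded z lam Hz Hlam (Rbar_lt_le _ _ (Rbar_le_lt_trans _ _ _ Hub Hlt))).
  unfold z in *; lra.
Qed.

(* By (H3) and (H4), [a_(i+1) / b_(i+1) = (Q_(i+1) / Q_i) (a_(i+1) / a_i)] has a positive
   lower limit. *)
Lemma ratio_eventually_bounded_below (r : R) : H3 a b -> H4 a -> z_s a b = Finite r ->
  exists eps N, 0 < eps /\ forall i, (N <= i)%nat -> eps <= a (S i) / b (S i).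
Proof.
  intros H3ab [l [Hl H4a]] Hr; unfold H3 in H3ab; rewrite Hr in H3ab.
  assert (HQ : exists m N, 0 < m /\ forall i, (N <= i)%nat -> m <= Qc a b (S i) / Qc a b i).
  { apply is_lim_seq_spec in H3ab; unfold Rbar_inv_ext in H3ab.
    destruct (Req_EM_T r 0) as [_|Hr0]; cbn -[Qc] in H3ab.
    - destruct (H3ab 1) as [N HN]; exists 1, N; split; [lra|]; intros i Hi; left; apply HN, Hi.
    - assert (Hr0' : 0 <= r)
        by (change (Rbar_le 0 (Finite r)); rewrite <- Hr; apply CV_radius_ge_0).
      assert (Hp : 0 < / r / 2) by (apply Rdiv_lt_0_compat; [apply Rinv_0_lt_compat; lra|lra]).
      destruct (H3ab (mkposreal _ Hp)) as [N HN]; exists (/ r / 2), N; split; [exact Hp|].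
      intros i Hi; specialize (HN i Hi); cbn -[Qc] in HN; apply Rabs_def2 in HN; lra. }
  destruct HQ as [m [N1 [Hm HN1]]].
  apply is_lim_seq_spec in H4a; assert (Hl2 : 0 < l / 2) by lra.
  destruct (H4a (mkposreal _ Hl2)) as [N2 HN2].
  exists (m * (l / 2)), (max 1 (max N1 N2)); split; [nra|].
  intros i Hi; specialize (HN1 i ltac:(lia)); specialize (HN2 i ltac:(lia)).
  simpl in HN2; apply Rabs_def2 in HN2.
  destruct i as [|k]; [lia|].
  pose proof (a_pos (S k) ltac:(lia)); pose proof (a_pos (S (S k)) ltac:(lia)).
  pose proof (b_pos (S (S k)) ltac:(lia)); pose proof (Qc_pos (S k)).
  replace (a (S (S k)) / b (S (S k)))
    with (Qc a b (S (S k)) / Qc a b (S k) * (a (S (S k)) / a (S k)))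
    by (rewrite Qc_SS; field; repeat split; lra).
  apply Rmult_le_compat; lra.
Qed.

Lemma no_steady_state_supercritical (lam : R) (C : nat -> R) : H3 a b -> H4 a -> 0 <= lam ->
  Rbar_lt (lambda_s a b) (Finite lam) -> ~ steady_state a b lam C.
Proof.
  intros H3ab H4a Hlam Hlt Hs.
  destruct (Rtotal_order (Jflux a b C 1) 0) as [Hneg|[Hzero|Hpos]].
  - destruct (z_s_finite lam Hlam Hlt) as [r Hr].
    destruct (ratio_eventually_bounded_below r H3ab H4a Hr) as [eps [N [Heps HN]]].
    apply (not_ex_series_of_pos_minorant (fun j => a (S j) * C (S j))
             (- Jflux a b C 1 * eps) (max N 1)); [nra| |apply Hs].
    intros k Hk; eapply Rle_trans; [|apply (steady_outflux_lower_bound lam C Hs k); lia].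
    apply Rmult_le_compat_l; [lra|apply HN; lia].
  - destruct (steady_zero_flux lam C Hs Hzero) as [Hx [HF Hzs]].
    pose proof (Fz_le_lambda_s _ Hx Hzs) as Hle; rewrite HF in Hle.
    pose proof (Rbar_le_lt_trans _ _ _ Hle Hlt) as Habs; simpl in Habs; lra.
  - exact (steady_flux_not_pos lam C Hs Hpos).
Qed.

End Coefficients.

Theorem mainTheorem13 (a b : nat -> R) (alpha lam : R) :
  0 <= alpha <= 1 -> 0 <= lam ->
  H1 a b alpha -> H2 a b -> H3 a b -> H4 a ->
  (Rbar_le (Finite lam) (lambda_s a b) ->
     exists z : R,
       (0 <= z /\ Rbar_le (Finite z) (z_s a b) /\ Fz a b z = Finite lam) /\
       (forall z', 0 <= z' -> Rbar_le (Finite z') (z_s a b) ->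
                   Fz a b z' = Finite lam -> z' = z) /\
       steady_state a b lam (fun i => Qc a b i * z ^ i) /\
       ((exists N, forall i, (N <= i)%nat -> b i <= INR i * a i) ->
          forall C, steady_state a b lam C ->
            forall i, (1 <= i)%nat -> C i = Qc a b i * z ^ i) /\
       ((exists nu N, 1 < nu /\ forall i, (N <= i)%nat -> b i > Rpower (INR i) nu * a i) ->
          infinitely_many_steady a b lam)) /\
  (Rbar_lt (lambda_s a b) (Finite lam) ->
     forall C, ~ steady_state a b lam C).
Proof.
  intros _ Hlam _ Hab H3ab H4a; split.
  - intro Hls; destruct (Fz_attains a b Hab lam Hlam Hls) as [z [Hz [Hzs HFz]]].
    exists z; split; [auto|split; [|split; [|split]]].
    + intros z' Hz' _ HFz'; exact (Fz_inj a b Hab z' z lam Hz' Hz HFz' HFz).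
    + exact (detailed_balance_steady a b Hab lam z Hz HFz).
    + intros [N HN] C Hs; exact (steady_state_unique a b Hab lam z N C HN Hz HFz Hs).
    + intros [nu [N [Hnu HN]]].
      exact (infinitely_many_steady_states a b Hab lam z nu N Hlam Hz HFz Hnu HN).
  - intros Hlt C; exact (no_steady_state_supercritical a b Hab lam C H3ab H4a Hlam Hlt).
Qed.
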